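(* Let $(H,\mu_H,\Delta_H,\alpha_H)$ be a Hom-bialgebra and $(C,\mu_C,\alpha_C)$ a right $H$-module Hom-algebra with action $c\otimes h\mapsto c\cdot h$, with $\alpha_H$ and $\alpha_C$ bijective. Define $R:C\otimes H\to H\otimes C$ by $R(c\otimes h)=\alpha_H^{-1}(h_1)\otimes\alpha_C^{-1}(c)\cdot\alpha_H^{-2}(h_2)$. Then $R$ is a Hom-twisting map between $H$ and $C$. Consequently $H\# C:=H\otimes_R C$ is a Hom-associative algebra with structure map $\alpha_H\otimes\alpha_C$ and multiplication $(h\# c)(h'\# c')=h\alpha_H^{-1}(h'_1)\#(\alpha_C^{-1}(c)\cdot\alpha_H^{-2}(h'_2))c'$.
   Context: Over a field $k$, no (co)units assumed; $\Delta(h)=h_1\otimes h_2$. Hom-associative algebra $(A,\mu,\alpha)$: $\alpha(aa')=\alpha(a)\alpha(a')$, $\alpha(a)(a'a'')=(aa')\alpha(a'')$. Hom-bialgebra $(H,\mu,\Delta,\alpha)$: $(H,\mu,\alpha)$ Hom-associative, $\Delta(h_1)\otimes\alpha(h_2)=\alpha(h_1)\otimes\Delta(h_2)$, $\Delta(hh')=h_1h'_1\otimes h_2h'_2$, $\Delta(\alpha(h))=\alpha(h_1)\otimes\alpha(h_2)$. Right $H$-module Hom-algebra: Hom-associative $(C,\mu_C,\alpha_C)$ with $c\otimes h\mapsto c\cdot h$ such that $\alpha_C(c\cdot h)=\alpha_C(c)\cdot\alpha_H(h)$, $(c\cdot h)\cdot\alpha_H(h')=\alpha_C(c)\cdot(hh')$,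 $(cc')\cdot\alpha_H^2(h)=(c\cdot h_1)(c'\cdot h_2)$. For Hom-associative $(A,\mu_A,\alpha_A),(B,\mu_B,\alpha_B)$, a Hom-twisting map between $A$ and $B$ is a linear $R:B\otimes A\to A\otimes B$ with $(\alpha_A\otimes\alpha_B)\circ R=R\circ(\alpha_B\otimes\alpha_A)$, $R\circ(\alpha_B\otimes\mu_A)=(\mu_A\otimes\alpha_B)\circ(\mathrm{id}_A\otimes R)\circ(R\otimes\mathrm{id}_A)$, $R\circ(\mu_B\otimes\alpha_A)=(\alpha_A\otimes\mu_B)\circ(R\otimes\mathrm{id}_B)\circ(\mathrm{id}_B\otimes R)$; $A\otimes_R B$ is $A\otimes B$ with product $(\mu_A\otimes\mu_B)\circ(\mathrm{id}_A\otimes R\otimes\mathrm{id}_B)$ and structure map $\alpha_A\otimes\alpha_B$. $h\# c$ denotes $h\otimes c$. *)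

(* Tensor products are not in the library: an element of
   V (x) W is represented by a formal sum of pure tensors (a seq of pairs),
   and two formal sums are equal in V (x) W iff every bilinear map out of
   V x W (into any k-vector space) takes the same value on them
   (universal property of the tensor product). *)
From HB Require Import structures.
From mathcomp Require Import all_boot all_order all_algebra.
Set Implicit Arguments. Unset Strict Implicit. Unset Printing Implicit Defensive.
Import Order.TTheory GRing.Theory Num.Theory.
Local Open Scope ring_scope.

Section TensorDefs.
Variable k : fieldType.

Definition linmap (V W : lmodType k) (f : V -> W) :=
  forall (a : k) (x y : V), f (a *: x + y) = a *: f x + f y.

Definition bilin (V W U : lmodType k) (f : V -> W -> U) :=
  (forall w, linmap (fun v => f v w)) /\ (forall v, linmap (f v)).

Definition trilin (V1 V2 V3 U : lmodType k) (f : V1 -> V2 -> V3 -> U) :=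
  [/\ (forall y z, linmap (fun x => f x y z)),
      (forall x z, linmap (fun y => f x y z)) &
      (forall x y, linmap (f x y))].

Definition tsum2 (V W U : lmodType k) (f : V -> W -> U) (s : seq (V * W)) : U :=
  \sum_(p <- s) f p.1 p.2.
Definition tsum3 (V1 V2 V3 U : lmodType k) (f : V1 -> V2 -> V3 -> U)
  (s : seq (V1 * V2 * V3)) : U := \sum_(p <- s) f p.1.1 p.1.2 p.2.

Definition teq2 (V W : lmodType k) (s t : seq (V * W)) :=
  forall (U : lmodType k) (f : V -> W -> U), bilin f -> tsum2 f s = tsum2 f t.
Definition teq3 (V1 V2 V3 : lmodType k) (s t : seq (V1 * V2 * V3)) :=
  forall (U : lmodType k) (f : V1 -> V2 -> V3 -> U), trilin f ->
    tsum3 f s = tsum3 f t.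

Definition tscale (V W : lmodType k) (a : k) (s : seq (V * W)) : seq (V * W) :=
  [seq (a *: p.1, p.2) | p <- s].
Definition tmap (V W V' W' : lmodType k) (f : V -> V') (g : W -> W')
  (s : seq (V * W)) : seq (V' * W') := [seq (f p.1, g p.2) | p <- s].

Definition lin_to2 (V W1 W2 : lmodType k) (D : V -> seq (W1 * W2)) :=
  forall (a : k) (x y : V), teq2 (D (a *: x + y)) (tscale a (D x) ++ D y).

Definition bilin_to2 (B A : lmodType k) (R : B -> A -> seq (A * B)) :=
  (forall a, lin_to2 (fun b => R b a)) /\ (forall b, lin_to2 (R b)).

Definition hom_assoc (A : lmodType k) (mu : A -> A -> A) (al : A -> A) :=
  [/\ bilin mu, linmap al,
      (forall x y, al (mu x y) = mu (al x) (al y)) &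
      (forall x y z, mu (al x) (mu y z) = mu (mu x y) (al z))].

(* Hom-bialgebra (no unit, no counit); Delta h = sum h_1 (x) h_2 *)
Definition hom_bialgebra (H : lmodType k) (mu : H -> H -> H)
  (D : H -> seq (H * H)) (al : H -> H) :=
  [/\ hom_assoc mu al, lin_to2 D,
      (forall h, teq3
         (flatten [seq [seq (q.1, q.2, al p.2) | q <- D p.1] | p <- D h])
         (flatten [seq [seq (al p.1, q.1, q.2) | q <- D p.2] | p <- D h])),
      (forall h h', teq2 (D (mu h h'))
         (flatten [seq [seq (mu p.1 q.1, mu p.2 q.2) | q <- D h'] | p <- D h])) &
      (forall h, teq2 (D (al h)) (tmap al al (D h)))].

Definition right_module_hom_algebra (H : lmodType k) (muH : H -> H -> H)
  (D : H -> seq (H * H)) (alH : H -> H)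
  (C : lmodType k) (muC : C -> C -> C) (alC : C -> C) (act : C -> H -> C) :=
  [/\ hom_assoc muC alC, bilin act,
      (forall c h, alC (act c h) = act (alC c) (alH h)),
      (forall c h h', act (act c h) (alH h') = act (alC c) (muH h h')) &
      (forall c c' h, act (muC c c') (alH (alH h)) =
         \sum_(p <- D h) muC (act c p.1) (act c' p.2))].

Definition hom_twisting (A : lmodType k) (muA : A -> A -> A) (alA : A -> A)
  (B : lmodType k) (muB : B -> B -> B) (alB : B -> B)
  (R : B -> A -> seq (A * B)) :=
  [/\ bilin_to2 R,
      (forall b a, teq2 (tmap alA alB (R b a)) (R (alB b) (alA a))),
      (forall b a a', teq2 (R (alB b) (muA a a'))
         (flatten [seq [seq (muA p.1 q.1, alB q.2) | q <- R p.2 a'] | p <- R b a])) &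
      (forall b b' a, teq2 (R (muB b b') (alA a))
         (flatten [seq [seq (alA p.1, muB p.2 q.2) | p <- R b q.1] | q <- R b' a]))].

Definition hom_assoc_tensor (A B : lmodType k)
  (m : seq (A * B) -> seq (A * B) -> seq (A * B))
  (al : seq (A * B) -> seq (A * B)) :=
  [/\
      [/\ (forall x x' y, teq2 x x' -> teq2 (m x y) (m x' y)),
      (forall x y y', teq2 y y' -> teq2 (m x y) (m x y')) &
      (forall x x', teq2 x x' -> teq2 (al x) (al x'))],
      (forall a x y, teq2 (m (tscale a x) y) (tscale a (m x y))),
      (forall a x y, teq2 (m x (tscale a y)) (tscale a (m x y))),
      (forall x y, teq2 (al (m x y)) (m (al x) (al y))) &
      (forall x y z, teq2 (m (al x) (m y z)) (m (m x y) (al z)))].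

End TensorDefs.

Definition smashR (k : fieldType) (H C : lmodType k) (D : H -> seq (H * H))
  (act : C -> H -> C) (alHi : H -> H) (alCi : C -> C) : C -> H -> seq (H * C) :=
  fun c h => [seq (alHi p.1, act (alCi c) (alHi (alHi p.2))) | p <- D h].

Definition smash_mul (k : fieldType) (H C : lmodType k) (muH : H -> H -> H)
  (D : H -> seq (H * H)) (muC : C -> C -> C) (act : C -> H -> C)
  (alHi : H -> H) (alCi : C -> C) (x y : seq (H * C)) : seq (H * C) :=
  flatten [seq flatten [seq
     [seq (muH p.1 (alHi r.1), muC (act (alCi p.2) (alHi (alHi r.2))) q.2)
     | r <- D q.1] | q <- y] | p <- x].

(* Twisting along a Hom-twisting map always yields a Hom-associative product:
   expanding (a # b)((a' # b')(a'' # b'')) and ((a # b)(a' # b'))(a'' # b'')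
   with the two multiplicativity axioms of R, both sides become the same
   fourfold sum up to the order of summation and the Hom-associativity of A
   and B.  So it suffices that the smash map
   R(c (x) h) = alH^-1(h_1) (x) alC^-1(c) . alH^-2(h_2) is a Hom-twisting map:
   its compatibility with alpha is Delta o alH = (alH (x) alH) o Delta, with muH
   it is multiplicativity of Delta together with (c . h) . alH h' = alC c . hh',
   and with muC it is the module-algebra axiom followed by Hom-coassociativity. *)

From mathcomp Require Import all_boot all_order all_algebra.
Set Implicit Arguments. Unset Strict Implicit. Unset Printing Implicit Defensive.
Import Order.TTheory GRing.Theory Num.Theory.
Local Open Scope ring_scope.

Section LinearMaps.
Variable k : fieldType.
Implicit Types V W X Y U : lmodType k.

Lemma linmap0 V W (g : V -> W) : linmap g -> g 0 = 0.
Proof.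
move=> lg; have := lg 1 0 0; rewrite addr0 !scale1r => h.
by apply: (addrI (g 0)); rewrite addr0 -h.
Qed.

Lemma linmapZ V W (g : V -> W) a x : linmap g -> g (a *: x) = a *: g x.
Proof. by move=> lg; have := lg a x 0; rewrite (linmap0 lg) !addr0. Qed.

Lemma linmapD V W (g : V -> W) x y : linmap g -> g (x + y) = g x + g y.
Proof. by move=> lg; have := lg 1 x y; rewrite !scale1r. Qed.

Lemma linmap_sum V W (g : V -> W) I (s : seq I) (F : I -> V) :
  linmap g -> g (\sum_(i <- s) F i) = \sum_(i <- s) g (F i).
Proof.
move=> lg; elim: s => [|i s IH]; first by rewrite !big_nil linmap0.
by rewrite !big_cons linmapD // IH.
Qed.

Lemma linmap_id V : linmap (fun u : V => u).
Proof. by []. Qed.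

Lemma linmap_comp V W X (f : W -> X) (g : V -> W) :
  linmap f -> linmap g -> linmap (fun u => f (g u)).
Proof. by move=> lf lg a x y; rewrite lg lf. Qed.

Lemma linmap_bilinl V W X Y (F : W -> X -> Y) (g : V -> W) y :
  bilin F -> linmap g -> linmap (fun u => F (g u) y).
Proof. by case=> lF _ lg a x z; rewrite lg lF. Qed.

Lemma linmap_bilinr V W X Y (F : W -> X -> Y) (g : V -> X) w :
  bilin F -> linmap g -> linmap (fun u => F w (g u)).
Proof. by case=> _ lF lg a x z; rewrite lg lF. Qed.

Lemma linmap_bigsum V W I (s : seq I) (G : I -> V -> W) :
  (forall i, linmap (G i)) -> linmap (fun u => \sum_(i <- s) G i u).
Proof.
move=> lG a x y; rewrite scaler_sumr -big_split; apply: eq_bigr => i _.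
exact: lG.
Qed.

Lemma linmap_can V W (f : V -> W) (g : W -> V) :
  linmap f -> cancel f g -> cancel g f -> linmap g.
Proof. by move=> lf fK gK a x y; apply: (can_inj fK); rewrite lf !gK. Qed.

Lemma bilin_split V W U (F : V -> W -> U) :
  (forall w, linmap (fun v => F v w)) -> (forall v, linmap (fun w => F v w)) ->
  bilin F.
Proof. by split. Qed.

Lemma bilinDl V W U (F : V -> W -> U) a x y w :
  bilin F -> F (a *: x + y) w = a *: F x w + F y w.
Proof. by case=> lF _; apply: lF. Qed.

Lemma bilinDr V W U (F : V -> W -> U) a x y v :
  bilin F -> F v (a *: x + y) = a *: F v x + F v y.
Proof. by case=> _ lF; apply: lF. Qed.

Lemma bilinZl V W U (F : V -> W -> U) a x w :
  bilin F -> F (a *: x) w = a *: F x w.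
Proof. by case=> lF _; rewrite (linmapZ _ _ (lF w)). Qed.

Lemma bilin_sumr V W U (F : V -> W -> U) I (s : seq I) (G : I -> W) v :
  bilin F -> F v (\sum_(i <- s) G i) = \sum_(i <- s) F v (G i).
Proof. by case=> _ lF; rewrite (linmap_sum _ _ (lF v)). Qed.

Lemma can_morph2 (T S : Type) (f : T -> S) (g : S -> T) muT muS :
  cancel f g -> cancel g f -> {morph f : x y / muT x y >-> muS x y} ->
  {morph g : x y / muS x y >-> muT x y}.
Proof. by move=> fK gK fM x y; apply: (can_inj fK); rewrite fM !gK. Qed.

End LinearMaps.

Section TensorSums.
Variable k : fieldType.
Implicit Types V W U : lmodType k.

Definition pbilin V W U (F : V * W -> U) := bilin (fun v w => F (v, w)).

Lemma teq2_sum V W U (s t : seq (V * W)) (F : V * W -> U) :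
  teq2 s t -> pbilin F -> \sum_(p <- s) F p = \sum_(p <- t) F p.
Proof.
move=> est bF; have sumE s' : \sum_(p <- s') F p = tsum2 (fun v w => F (v, w)) s'.
  by apply: eq_bigr => -[].
by rewrite !sumE; apply: est.
Qed.

Lemma lin_to2_sum V W1 W2 U (D : V -> seq (W1 * W2)) (F : W1 * W2 -> U) :
  lin_to2 D -> pbilin F -> linmap (fun x => \sum_(r <- D x) F r).
Proof.
move=> lD bF a x y; rewrite (teq2_sum (lD a x y) bF) big_cat /= big_map.
rewrite scaler_sumr; congr (_ + _); apply: eq_bigr => -[v w] _ /=.
by rewrite (bilinZl _ _ _ bF).
Qed.

Lemma pbilin_comp V W V' W' U (F : V * W -> U) (f : V' -> V) (g : W' -> W) :
  pbilin F -> linmap f -> linmap g -> pbilin (fun p => F (f p.1, g p.2)).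
Proof.
case=> lF1 lF2 lf lg; split=> [w|v] a x y /=; first by rewrite lf lF1.
by rewrite lg lF2.
Qed.

Lemma big_flatten_map2 U I J T (s : seq I) (S : I -> seq J) (E : I -> J -> T)
    (G : T -> U) :
  \sum_(x <- flatten [seq [seq E p q | q <- S p] | p <- s]) G x =
  \sum_(p <- s) \sum_(q <- S p) G (E p q).
Proof.
by rewrite big_flatten big_map; apply: eq_bigr => p _; rewrite big_map.
Qed.

End TensorSums.

Ltac linearity := repeat first
  [ exact: linmap_id
  | progress rewrite /pbilin
  | progress (apply: bilin_split => ? /=)
  | (apply: linmap_bigsum => ? /=)
  | lazymatch goal with |- linmap (fun u => \sum_(r <- @?D u) @?F u r) =>
      apply: (lin_to2_sum (D := D)); [solve [eauto]|] end
  | (apply: linmap_bilinr; [solve [eauto]|])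
  | (apply: linmap_bilinl; [solve [eauto]|])
  | (apply: linmap_comp; [solve [eauto]|])
  | solve [eauto] ].

Section TwistedTensorProduct.
Variables (k : fieldType) (A B : lmodType k).
Variables (muA : A -> A -> A) (alA : A -> A) (muB : B -> B -> B) (alB : B -> B).
Variable R : B -> A -> seq (A * B).
Hypotheses (assA : hom_assoc muA alA) (assB : hom_assoc muB alB).
Hypothesis twR : hom_twisting muA alA muB alB R.

Definition twisted_mul (x y : seq (A * B)) : seq (A * B) :=
  flatten [seq flatten [seq [seq (muA p.1 s.1, muB s.2 q.2) | s <- R p.2 q.1]
    | q <- y] | p <- x].

Lemma big_twisted_mul (U : lmodType k) (G : A * B -> U) x y :
  \sum_(z <- twisted_mul x y) G z =
  \sum_(p <- x) \sum_(q <- y) \sum_(s <- R p.2 q.1) G (muA p.1 s.1, muB s.2 q.2).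
Proof.
by rewrite big_flatten big_map; apply: eq_bigr => p _; rewrite big_flatten_map2.
Qed.

Lemma big_twist_alpha (U : lmodType k) (F : A * B -> U) b a : pbilin F ->
  \sum_(s <- R (alB b) (alA a)) F s = \sum_(s <- R b a) F (alA s.1, alB s.2).
Proof.
by case: twR => _ Ral _ _ bF; rewrite -(teq2_sum (Ral b a) bF) big_map.
Qed.

Lemma big_twist_mull (U : lmodType k) (F : A * B -> U) b a a' : pbilin F ->
  \sum_(s <- R (alB b) (muA a a')) F s =
  \sum_(t <- R b a) \sum_(u <- R t.2 a') F (muA t.1 u.1, alB u.2).
Proof.
by case: twR => _ _ Rml _ bF; rewrite (teq2_sum (Rml b a a') bF) big_flatten_map2.
Qed.

Lemma big_twist_mulr (U : lmodType k) (F : A * B -> U) b b' a : pbilin F ->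
  \sum_(s <- R (muB b b') (alA a)) F s =
  \sum_(r <- R b' a) \sum_(u <- R b r.1) F (alA u.1, muB u.2 r.2).
Proof.
by case: twR => _ _ _ Rmr bF; rewrite (teq2_sum (Rmr b b' a) bF) big_flatten_map2.
Qed.

Lemma twisted_mul_teql x x' y :
  teq2 x x' -> teq2 (twisted_mul x y) (twisted_mul x' y).
Proof.
case: assA assB twR => bmuA _ _ _ [bmuB _ _ _] [[lRl _] _ _ _].
move=> exx U f bf; rewrite /tsum2 !big_twisted_mul; apply: (teq2_sum exx).
linearity.
Qed.

Lemma twisted_mul_teqr x y y' :
  teq2 y y' -> teq2 (twisted_mul x y) (twisted_mul x y').
Proof.
case: assA assB twR => bmuA _ _ _ [bmuB _ _ _] [[_ lRr] _ _ _].
move=> eyy U f bf; rewrite /tsum2 !big_twisted_mul exchange_big /=.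
by rewrite [RHS]exchange_big; apply: (teq2_sum eyy); linearity.
Qed.

Lemma tmap_teq x x' : teq2 x x' -> teq2 (tmap alA alB x) (tmap alA alB x').
Proof.
case: assA assB => _ lalA _ _ [_ lalB _ _].
by move=> exx U f bf; rewrite /tsum2 !big_map; apply: (teq2_sum exx); linearity.
Qed.

Lemma twisted_mulZl a x y :
  teq2 (twisted_mul (tscale a x) y) (tscale a (twisted_mul x y)).
Proof.
case: assA => bmuA _ _ _ U f bf.
rewrite /tsum2 /tscale !big_map !big_twisted_mul big_map.
apply: eq_bigr => p _; apply: eq_bigr => q _; apply: eq_bigr => s _ /=.
by rewrite (bilinZl _ _ _ bmuA) (bilinZl _ _ _ bf).
Qed.

Lemma twisted_mulZr a x y :
  teq2 (twisted_mul x (tscale a y)) (tscale a (twisted_mul x y)).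
Proof.
case: assA assB twR => bmuA _ _ _ [bmuB _ _ _] [[_ lRr] _ _ _] U f bf.
rewrite /tsum2 /tscale !big_map !big_twisted_mul.
apply: eq_bigr => p _; rewrite big_map; apply: eq_bigr => q _ /=.
have lsum : linmap (fun a' => \sum_(s <- R p.2 a') f (muA p.1 s.1) (muB s.2 q.2)).
  by linearity.
rewrite (linmapZ _ _ lsum) scaler_sumr.
by apply: eq_bigr => s _; rewrite (bilinZl _ _ _ bf).
Qed.

Lemma tmap_twisted_mul x y :
  teq2 (tmap alA alB (twisted_mul x y))
       (twisted_mul (tmap alA alB x) (tmap alA alB y)).
Proof.
case: assA assB => bmuA _ alAM _ [bmuB _ alBM _] U f bf.
rewrite /tsum2 /tmap big_map !big_twisted_mul big_map.
apply: eq_bigr => p _; rewrite big_map; apply: eq_bigr => q _ /=.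
rewrite big_twist_alpha; last by linearity.
by apply: eq_bigr => s _; rewrite alAM alBM.
Qed.

Lemma twisted_mul_hom_assoc x y z :
  teq2 (twisted_mul (tmap alA alB x) (twisted_mul y z))
       (twisted_mul (twisted_mul x y) (tmap alA alB z)).
Proof.
case: assA assB => bmuA _ _ assocA [bmuB _ _ assocB] U f bf.
rewrite /tsum2 !big_twisted_mul big_map; apply: eq_bigr => p _ /=.
rewrite big_twisted_mul; apply: eq_bigr => q _ /=.
rewrite exchange_big big_map; apply: eq_bigr => w _ /=.
transitivity (\sum_(r <- R q.2 w.1) \sum_(t <- R p.2 q.1) \sum_(u <- R t.2 r.1)
  f (muA (muA p.1 t.1) (alA u.1)) (muB (muB u.2 r.2) (alB w.2))).
  apply: eq_bigr => r _; rewrite big_twist_mull /=; last by linearity.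
  by apply: eq_bigr => t _; apply: eq_bigr => u _; rewrite assocA assocB.
rewrite exchange_big; apply: eq_bigr => t _.
by rewrite big_twist_mulr; last by linearity.
Qed.

Theorem twisted_tensor_hom_assoc :
  hom_assoc_tensor twisted_mul (tmap alA alB).
Proof.
split; [split | | | |].
- exact: twisted_mul_teql.
- exact: twisted_mul_teqr.
- exact: tmap_teq.
- exact: twisted_mulZl.
- exact: twisted_mulZr.
- exact: tmap_twisted_mul.
- exact: twisted_mul_hom_assoc.
Qed.

End TwistedTensorProduct.

Lemma eq_hom_assoc_tensor (k : fieldType) (A B : lmodType k)
    (m m' : seq (A * B) -> seq (A * B) -> seq (A * B))
    (al : seq (A * B) -> seq (A * B)) :
  m =2 m' -> hom_assoc_tensor m' al -> hom_assoc_tensor m al.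
Proof.
move=> mE [[teql teqr teqal] Zl Zr alM assoc].
by split; [split| | | |] => *; rewrite ?mE; auto.
Qed.

Section SmashProduct.
Variables (k : fieldType) (H C : lmodType k).
Variables (muH : H -> H -> H) (D : H -> seq (H * H)) (alH alHi : H -> H).
Variables (muC : C -> C -> C) (alC alCi : C -> C) (act : C -> H -> C).
Hypothesis bialgH : hom_bialgebra muH D alH.
Hypothesis modC : right_module_hom_algebra muH D alH muC alC act.
Hypotheses (alHK : cancel alH alHi) (alHiK : cancel alHi alH).
Hypotheses (alCK : cancel alC alCi) (alCiK : cancel alCi alC).

Let lalH : linmap alH. Proof. by case: bialgH => -[]. Qed.
Let alHM x y : alH (muH x y) = muH (alH x) (alH y).
Proof. by case: bialgH => -[]. Qed.
Let lD : lin_to2 D. Proof. by case: bialgH. Qed.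
Let DM h h' : teq2 (D (muH h h'))
  (flatten [seq [seq (muH p.1 q.1, muH p.2 q.2) | q <- D h'] | p <- D h]).
Proof. by case: bialgH. Qed.
Let Dal h : teq2 (D (alH h)) (tmap alH alH (D h)). Proof. by case: bialgH. Qed.
Let bmuC : bilin muC. Proof. by case: modC => -[]. Qed.
Let lalC : linmap alC. Proof. by case: modC => -[]. Qed.
Let alCM c c' : alC (muC c c') = muC (alC c) (alC c').
Proof. by case: modC => -[]. Qed.
Let bact : bilin act. Proof. by case: modC. Qed.
Let alC_act c h : alC (act c h) = act (alC c) (alH h). Proof. by case: modC. Qed.
Let act_act c h h' : act (act c h) (alH h') = act (alC c) (muH h h').
Proof. by case: modC. Qed.
Let act_mul c c' h :
  act (muC c c') (alH (alH h)) = \sum_(p <- D h) muC (act c p.1) (act c' p.2).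
Proof. by case: modC. Qed.
Let lalHi : linmap alHi := linmap_can lalH alHK alHiK.
Let lalCi : linmap alCi := linmap_can lalC alCK alCiK.
Local Hint Resolve lalH lD bmuC lalC bact lalHi lalCi : core.

Lemma big_D_alH (U : lmodType k) (F : H * H -> U) h : pbilin F ->
  \sum_(s <- D (alH h)) F s = \sum_(s <- D h) F (alH s.1, alH s.2).
Proof. by move=> bF; rewrite (teq2_sum (Dal h) bF) big_map. Qed.

Lemma big_D_alHi (U : lmodType k) (F : H * H -> U) h : pbilin F ->
  \sum_(s <- D (alHi h)) F s = \sum_(s <- D h) F (alHi s.1, alHi s.2).
Proof.
move=> bF; rewrite -{2}[h]alHiK big_D_alH; last exact: pbilin_comp bF lalHi lalHi.
by apply: eq_bigr => -[u v] _ /=; rewrite !alHK.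
Qed.

Lemma alHiM x y : alHi (muH x y) = muH (alHi x) (alHi y).
Proof. exact: (can_morph2 alHK alHiK alHM). Qed.

Lemma alCiM c c' : alCi (muC c c') = muC (alCi c) (alCi c').
Proof. exact: (can_morph2 alCK alCiK alCM). Qed.

Lemma big_coassoc (U : lmodType k) (G : H -> H -> H -> U) h : trilin G ->
  \sum_(p <- D h) \sum_(q <- D p.1) G q.1 q.2 (alH p.2) =
  \sum_(p <- D h) \sum_(q <- D p.2) G (alH p.1) q.1 q.2.
Proof.
case: bialgH => _ _ coassD _ _ tG.
by have := coassD h _ G tG; rewrite /tsum3 !big_flatten_map2.
Qed.

(* The module-algebra axiom with the argument written as alH^2 (alHi^3 h). *)
Lemma act_mul_alHi c c' h :
  act (muC c c') (alHi h) =
  \sum_(p <- D h) muC (act c (alHi (alHi (alHi p.1))))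
                      (act c' (alHi (alHi (alHi p.2)))).
Proof.
rewrite -{1}[alHi h]alHiK -[alHi (alHi h)]alHiK act_mul.
by rewrite !big_D_alHi //=; linearity.
Qed.

Local Notation R := (smashR D act alHi alCi).

Lemma smashR_bilin : bilin_to2 R.
Proof.
split=> [h|c] a x y U f bf; rewrite /tsum2 /smashR big_cat /= !big_map.
  rewrite -big_split; apply: eq_bigr => r _ /=.
  by rewrite lalCi (bilinDl _ _ _ _ bact) (bilinDr _ _ _ _ bf) (bilinZl _ _ _ bf).
have lsum : linmap (fun h => \sum_(r <- D h)
    f (alHi r.1) (act (alCi c) (alHi (alHi r.2)))) by linearity.
rewrite lsum scaler_sumr; congr (_ + _).
by apply: eq_bigr => r _; rewrite (bilinZl _ _ _ bf).
Qed.

Lemma smashR_alpha c h : teq2 (tmap alH alC (R c h)) (R (alC c) (alH h)).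
Proof.
move=> U f bf; rewrite /tsum2 /smashR /tmap !big_map.
rewrite big_D_alH /=; last by linearity.
by apply: eq_bigr => r _; rewrite alC_act alCiK !alHiK !alHK alCK.
Qed.

Lemma smashR_mull c h h' : teq2 (R (alC c) (muH h h'))
  (flatten [seq [seq (muH p.1 q.1, alC q.2) | q <- R p.2 h'] | p <- R c h]).
Proof.
move=> U f bf; rewrite /tsum2 /smashR big_flatten_map2 big_map /=.
rewrite (teq2_sum (DM h h')) /=; last by linearity.
rewrite big_flatten_map2 big_map; apply: eq_bigr => p _; rewrite big_map.
apply: eq_bigr => q _ /=.
by rewrite alCK !alHiM alC_act alCiK act_act alCiK.
Qed.

Lemma smashR_mulr c c' h : teq2 (R (muC c c') (alH h))
  (flatten [seq [seq (alH p.1, muC p.2 q.2) | p <- R c q.1] | q <- R c' h]).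
Proof.
move=> U f bf; rewrite /tsum2 /smashR big_map big_D_alH /=; last by linearity.
pose G a b w := f (alHi a) (muC (act (alCi c) (alHi (alHi (alHi b))))
                                (act (alCi c') (alHi (alHi (alHi w))))).
have tG : trilin G by split=> * /=; linearity.
transitivity (\sum_(p <- D h) \sum_(q <- D p.2) G (alH p.1) q.1 q.2).
  apply: eq_bigr => r _; rewrite !alHK alCiM act_mul_alHi (bilin_sumr _ _ _ bf).
  by apply: eq_bigr => t _; rewrite /G alHK.
rewrite -big_coassoc // big_flatten_map2 big_map; apply: eq_bigr => q _ /=.
rewrite big_map big_D_alHi /=; last by linearity.
by apply: eq_bigr => t _; rewrite /G !alHiK alHK.
Qed.

Lemma smashR_twisting : hom_twisting muH alH muC alC R.
Proof.
split; [exact: smashR_bilin | exact: smashR_alpha | exact: smashR_mull |].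
exact: smashR_mulr.
Qed.

Lemma smash_mul_twisted :
  smash_mul muH D muC act alHi alCi =2 twisted_mul muH muC R.
Proof.
move=> x y; rewrite /smash_mul /twisted_mul /smashR; congr flatten.
apply: eq_map => p; congr flatten; apply: eq_map => q.
by rewrite -map_comp.
Qed.

End SmashProduct.

Theorem theorem3p13 (k : fieldType) (H : lmodType k)
  (muH : H -> H -> H) (D : H -> seq (H * H)) (alH alHi : H -> H)
  (C : lmodType k) (muC : C -> C -> C) (alC alCi : C -> C)
  (act : C -> H -> C) :
  hom_bialgebra muH D alH ->
  right_module_hom_algebra muH D alH muC alC act ->
  cancel alH alHi -> cancel alHi alH ->
  cancel alC alCi -> cancel alCi alC ->
  hom_twisting muH alH muC alC (smashR D act alHi alCi) /\
  hom_assoc_tensor (smash_mul muH D muC act alHi alCi) (tmap alH alC).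
Proof.
move=> bialgH modC alHK alHiK alCK alCiK.
have twR := smashR_twisting bialgH modC alHK alHiK alCK alCiK.
split=> //; apply: (eq_hom_assoc_tensor (smash_mul_twisted _ _ _ _ _ _)).
have [[assH _ _ _ _] [assC _ _ _ _]] := (bialgH, modC).
exact: twisted_tensor_hom_assoc.
Qed.
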